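(* Let $\mathcal I,\mathcal J$ be ideals on $\omega$. Then (1) $\mathfrak b_s(\mathcal I\otimes\mathcal J)=\mathfrak b_s(\mathcal I)$; (2) $\mathfrak b_\sigma(\mathcal I\otimes\mathcal J)=\min\{\mathfrak b_\sigma(\mathcal I),\mathfrak b_\sigma(\mathcal J)\}$; (3) $\mathrm{add}_\omega(\mathcal I\otimes\mathcal J)\le\min\{\mathrm{add}_\omega(\mathcal I),\mathrm{add}_\omega(\mathcal J)\}$.
   Context: An ideal on a countably infinite set $S$ is a family of subsets of $S$ closed under finite unions and subsets, containing all finite sets, not containing $S$. $\mathcal I\otimes\mathcal J=\{A\subseteq\omega\times\omega:\{x\in\omega:\{y:(x,y)\in A\}\notin\mathcal J\}\in\mathcal I\}$, an ideal on $\omega\times\omega$. Convention: $\min\emptyset=\infty$, $\kappa<\infty$ for every cardinal. For an ideal $\mathcal I$ on a countably infinite set $S$: $\widehat{\mathcal P}_{\mathcal I}$ = sequences $(A_n)_{n\in\omega}\in\mathcal I^\omega$ of pairwise disjoint sets; $\mathcal P_{\mathcal I}$ = those with $\bigcup_nA_n=S$; $\mathcal M_{\mathcal I}$ = sequences $(E_k)_{k\in\omega}\in\mathcal I^\omega$ with $E_k\subseteq E_{k+1}$. $\mathfrak b_s(\mathcal I)=\min\{|\mathcal E|:\mathcal E\subseteq\widehat{\mathcal P}_{\mathcal I}$ and for every $(A_n)\in\mathcal P_{\mathcal I}$ there is $(E_n)\in\mathcal E$ with $\bigcup_n(A_{n+1}\cap\bigcup_{i\le n}E_i)\notin\mathcal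 I\}$; $\mathfrak b_\sigma(\mathcal I)=\min\{|\mathcal E|:\mathcal E\subseteq\mathcal M_{\mathcal I}$ and for every $(A_n)\in\mathcal M_{\mathcal I}$ there is $(E_n)\in\mathcal E$ with $E_n\not\subseteq A_n$ for infinitely many $n\}$; $\mathrm{add}_\omega(\mathcal I)=\min\{|\mathcal A|:\mathcal A\subseteq\mathcal I$ and for every $(B_n)\in\mathcal I^\omega$ there is $A\in\mathcal A$ with $A\not\subseteq B_n$ for all $n\}$. *)

From mathcomp Require Import all_boot all_order.
From mathcomp Require Import boolp classical_sets functions cardinality.
Set Implicit Arguments. Unset Strict Implicit. Unset Printing Implicit Defensive.
Local Open Scope classical_set_scope.

Definition ideal (S : Type) (I : set (set S)) : Prop :=
  (forall A B, I A -> I B -> I (A `|` B)) /\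
  (forall A B, B `<=` A -> I A -> I B) /\
  (forall A, finite_set A -> I A) /\
  ~ I setT.

Definition ideal_prod (I J : set (set nat)) : set (set (nat * nat)) :=
  [set A | I [set x | ~ J [set y | A (x, y)]]].

Definition Phat (S : Type) (I : set (set S)) : set (nat -> set S) :=
  [set A | (forall n, I (A n)) /\
           (forall n m, n <> m -> A n `&` A m = set0)].

Definition Ppart (S : Type) (I : set (set S)) : set (nat -> set S) :=
  [set A | Phat I A /\ \bigcup_n A n = setT].

Definition Mseq (S : Type) (I : set (set S)) : set (nat -> set S) :=
  [set E | (forall k, I (E k)) /\ (forall k, E k `<=` E k.+1)].

Definition bs_fam (S : Type) (I : set (set S)) (F : set (nat -> set S)) : Prop :=
  F `<=` Phat I /\
  forall A, Ppart I A ->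
    exists2 E, F E &
      ~ I (\bigcup_n (A n.+1 `&` \bigcup_(i in [set i | (i <= n)%N]) E i)).

Definition bsigma_fam (S : Type) (I : set (set S)) (F : set (nat -> set S)) : Prop :=
  F `<=` Mseq I /\
  forall A, Mseq I A ->
    exists2 E, F E & forall m, exists n, (m <= n)%N /\ ~ (E n `<=` A n).

Definition addw_fam (S : Type) (I : set (set S)) (F : set (set S)) : Prop :=
  F `<=` I /\
  forall B : nat -> set S, (forall n, I (B n)) ->
    exists2 A, F A & forall n, ~ (A `<=` B n).

(* Comparison of cardinal minima, with min(empty) = infinity above all
   cardinals:  inv_le P Q  <->  min{|F| : P F} <= min{|G| : Q G}. *)
Definition inv_le (X Y : Type) (P : set X -> Prop) (Q : set Y -> Prop) : Prop :=
  forall G : set Y, Q G -> exists2 F : set X, P F & card_le F G.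

Definition inv_le_min (X Y Z : Type) (P : set X -> Prop)
  (Q1 : set Y -> Prop) (Q2 : set Z -> Prop) : Prop :=
  inv_le P Q1 /\ inv_le P Q2.

(* min( min{|F| : P1 F}, min{|F| : P2 F} ) <= min{|G| : Q G}. *)
Definition min_inv_le (X Y Z : Type) (P1 : set X -> Prop) (P2 : set Y -> Prop)
  (Q : set Z -> Prop) : Prop :=
  forall G : set Z, Q G ->
    (exists2 F : set X, P1 F & card_le F G) \/
    (exists2 F : set Y, P2 F & card_le F G).

From mathcomp Require Import all_boot all_order.
From mathcomp Require Import boolp classical_sets functions cardinality.
Set Implicit Arguments. Unset Strict Implicit. Unset Printing Implicit Defensive.
Local Open Scope classical_set_scope.

(* Each comparison is a reduction between the defining families.  A set
   [E] of naturals lifts to the cylinder [fst @^-1` E] (or [snd @^-1` E]),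
   and a set [A] of pairs pushes down to [pos_sections J A], the [x] whose
   section is [J]-positive, which is in [I] exactly when [A] is in [I (x) J];
   alternatively, picking one [J]-small section of each member of a
   sequence in [I (x) J] pushes the sequence down to [J].  For
   [b_s(I) <= b_s(I (x) J)] the pushed-down sequences are disjointified; for
   the converse a partition of the square is pushed down along the first
   stage at which a column becomes [J]-positive.  The lower bound for
   [b_sigma(I (x) J)] is by contradiction: an [I]-side and a [J]-side
   dominating sequence combine into a single dominating [corner] sequence. *)

Lemma ex_least (P : nat -> Prop) n :
  P n -> exists2 m, P m & forall k, (k < m)%N -> ~ P k.
Proof.
move=> Pn; have exP : exists n, `[< P n >] by exists n; apply/asboolP.
case: (ex_minnP exP) => m /asboolP Pm minm; exists m => // k km /asboolP /minm.
by rewrite leqNgt km.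
Qed.

Lemma subset_chain_le (S : Type) (F : nat -> set S) :
  (forall k, F k `<=` F k.+1) -> {homo F : m n / (m <= n)%N >-> m `<=` n}.
Proof. exact: homo_leq (@subset_refl _) (@subset_trans _). Qed.

Definition disjointed (S : Type) (F : nat -> set S) (n : nat) : set S :=
  [set x | F n x /\ forall k, (k < n)%N -> ~ F k x].

Lemma disjointed_sub (S : Type) (F : nat -> set S) n : disjointed F n `<=` F n.
Proof. by move=> x []. Qed.

Lemma disjointed_disjoint (S : Type) (F : nat -> set S) n m :
  n <> m -> disjointed F n `&` disjointed F m = set0.
Proof.
move=> /eqP nm; apply/seteqP; split => // x [[Fn minn] [Fm minm]].
case: (ltngtP n m) nm => // [nm _|mn _].
  exact: minm nm Fn.
exact: minn mn Fm.
Qed.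

Lemma disjointed_cover (S : Type) (F : nat -> set S) n x :
  F n x -> exists2 m, (m <= n)%N & disjointed F m x.
Proof.
move=> Fn; have [m Fm minm] := ex_least (P := F^~ x) Fn.
exists m; last by split.
by rewrite leqNgt; apply/negP => /minm; apply.
Qed.

Lemma bigcup_le0 (S : Type) (F : nat -> set S) :
  \bigcup_(i in [set i | (i <= 0)%N]) F i = F 0.
Proof.
apply/seteqP; split=> [y [i /=]|y F0y]; last by exists 0.
by rewrite leqn0 => /eqP ->.
Qed.

Lemma bigcup_leS (S : Type) (F : nat -> set S) k :
  \bigcup_(i in [set i | (i <= k.+1)%N]) F i =
  \bigcup_(i in [set i | (i <= k)%N]) F i `|` F k.+1.
Proof.
apply/seteqP; split=> [y [i /=]|y [[i /= ik Fy]|Fy]].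
- by rewrite leq_eqVlt => /predU1P [->|ik] Fy; [right|left; exists i].
- by exists i => //=; exact: leqW.
- by exists k.+1 => /=.
Qed.

Section ideal_facts.
Variables (S : Type) (K : set (set S)).
Hypothesis idK : ideal K.

Lemma idealS A B : B `<=` A -> K A -> K B.
Proof. by case: idK => _ [+ _]; apply. Qed.

Lemma idealU A B : K A -> K B -> K (A `|` B).
Proof. by case: idK => + _; apply. Qed.

Lemma ideal0 : K set0.
Proof. by case: idK => _ [_ [+ _]]; apply; exact: finite_set0. Qed.

Lemma ideal1 x : K [set x].
Proof. by case: idK => _ [_ [+ _]]; apply; exact: finite_set1. Qed.

Lemma idealNsupC A B : K A -> ~` A `<=` B -> ~ K B.
Proof.
move=> KA AB KB; case: idK => _ [_ [_]]; apply.
apply: idealS (idealU KA KB) => x _.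
by case: (pselect (A x)) => [|/AB]; [left|right].
Qed.

Lemma ideal_not_full A : K A -> exists x, ~ A x.
Proof. by move=> KA; apply/existsNP => fullA; exact: idealNsupC ideal0 _ KA. Qed.

Lemma not_ideal_inhabited A : ~ K A -> exists x, A x.
Proof.
move=> nKA; apply: contrapT => /forallNP emptyA; apply: nKA.
exact: idealS ideal0.
Qed.

Lemma ideal_bigcup_le (F : nat -> set S) k :
  (forall i, (i <= k)%N -> K (F i)) ->
  K (\bigcup_(i in [set i | (i <= k)%N]) F i).
Proof.
elim: k => [|k IH] KF; first by rewrite bigcup_le0; exact: KF.
rewrite bigcup_leS; apply: idealU; last exact: KF.
by apply: IH => i ik; apply: KF; exact: leqW.
Qed.

End ideal_facts.

Lemma inv_le_image (X Y : Type) (P : set X -> Prop) (Q : set Y -> Prop)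
    (f : Y -> X) :
  (forall G, Q G -> P (f @` G)) -> inv_le P Q.
Proof. by move=> PQ G /PQ PfG; exists (f @` G) => //; exact: card_image_le. Qed.

Definition caught (S : Type) (A E : nat -> set S) : set S :=
  \bigcup_n (A n.+1 `&` \bigcup_(i in [set i | (i <= n)%N]) E i).

Section transfer.
Variables (S T : Type) (K : set (set S)) (L : set (set T)).

Lemma bs_fam_transfer (f : (nat -> set S) -> nat -> set T) :
  (forall E, Phat K E -> Phat L (f E)) ->
  (forall A, Ppart L A -> exists2 B, Ppart K B &
     forall E, L (caught A (f E)) -> K (caught B E)) ->
  inv_le (bs_fam L) (bs_fam K).
Proof.
move=> Phatf refine; apply: (inv_le_image (f := f)) => G [GK HG].
split; first by move=> _ [E /GK /Phatf PE <-].
move=> A /refine [B /HG [E GE nKE] BA].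
by exists (f E); [exists E | move/BA].
Qed.

Lemma bsigma_fam_transfer (f : (nat -> set S) -> nat -> set T) :
  (forall E, Mseq K E -> Mseq L (f E)) ->
  (forall A, Mseq L A -> exists2 B, Mseq K B &
     forall E n, f E n `<=` A n -> E n `<=` B n) ->
  inv_le (bsigma_fam L) (bsigma_fam K).
Proof.
move=> Mf dominate; apply: (inv_le_image (f := f)) => G [GK HG].
split; first by move=> _ [E /GK /Mf ME <-].
move=> A /dominate [B /HG [E GE EB] BA].
exists (f E); first by exists E.
by move=> m; have [n [mn nEB]] := EB m; exists n; split => // /BA.
Qed.

Lemma addw_fam_transfer (f : set S -> set T) :
  (forall E, K E -> L (f E)) ->
  (forall A : nat -> set T, (forall n, L (A n)) ->
     exists2 B : nat -> set S, (forall n, K (B n)) &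
     forall E n, f E `<=` A n -> E `<=` B n) ->
  inv_le (addw_fam L) (addw_fam K).
Proof.
move=> Lf dominate; apply: (inv_le_image (f := f)) => G [GK HG].
split; first by move=> _ [E /GK /Lf LE <-].
move=> A /dominate [B /HG [E GE EB] BA].
by exists (f E); [exists E | move=> n /BA /EB].
Qed.

End transfer.

Lemma bsigma_famN_dominated (S T : Type) (K : set (set S)) (G : set T)
    (f : T -> nat -> set S) :
  (forall E, G E -> Mseq K (f E)) -> ~ bsigma_fam K (f @` G) ->
  exists2 A, Mseq K A & exists N : T -> nat,
    forall E, G E -> forall n, (N E <= n)%N -> f E n `<=` A n.
Proof.
move=> Mf /not_andP [nMf|]; first by exfalso; apply: nMf => _ [E /Mf ME <-].
move=> /existsNP [A /not_implyP [MA noE]]; exists A => //.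
have dom E : exists N, G E -> forall n, (N <= n)%N -> f E n `<=` A n.
  have [GE|nGE] := pselect (G E); last by exists 0.
  apply: contrapT => /forallNP nodom; apply: noE; exists (f E); first by exists E.
  move=> m; have /not_implyP [_ /existsNP [n /not_implyP [mn nEA]]] := nodom m.
  by exists n.
by have [N domN] := choice dom; exists N => E /domN.
Qed.

Definition pos_sections (J : set (set nat)) (A : set (nat * nat)) : set nat :=
  [set x | ~ J [set y | A (x, y)]].

Section fubini_product.
Variables I J : set (set nat).
Hypotheses (idI : ideal I) (idJ : ideal J).

Lemma ideal_prodE A : ideal_prod I J A = I (pos_sections J A).
Proof. by []. Qed.

Lemma pos_sectionsS A B : A `<=` B -> pos_sections J A `<=` pos_sections J B.
Proof. by move=> AB x nJA JB; apply: nJA; apply: (idealS idJ _ JB) => y /AB. Qed.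

Lemma pos_sections_fst E : pos_sections J (fst @^-1` E) = E.
Proof.
apply/seteqP; split => x /=.
  by move=> nJ; apply: contrapT => nEx; apply: nJ; exact: (idealS idJ _ (ideal0 idJ)).
by move=> Ex; apply: (idealNsupC idJ (ideal0 idJ)).
Qed.

Lemma pos_sections_snd E : J E -> pos_sections J (snd @^-1` E) = set0.
Proof. by move=> JE; apply/seteqP; split => x //=; apply. Qed.

Lemma ideal_prod_fst E : I E -> ideal_prod I J (fst @^-1` E).
Proof. by rewrite ideal_prodE pos_sections_fst. Qed.

Lemma ideal_prod_snd E : J E -> ideal_prod I J (snd @^-1` E).
Proof. by move=> JE; rewrite ideal_prodE pos_sections_snd //; exact: ideal0. Qed.

Lemma ideal_prod_section A : ideal_prod I J A -> exists x, J [set y | A (x, y)].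
Proof. by move=> /(ideal_not_full idI) [x /contrapT]; exists x. Qed.

Lemma Phat_fst E : Phat I E -> Phat (ideal_prod I J) (fun n => fst @^-1` E n).
Proof.
move=> [IE Edisj]; split=> [n|n m nm]; first exact: ideal_prod_fst.
by rewrite -preimage_setI Edisj // preimage_set0.
Qed.

Lemma Ppart_fst A : Ppart I A -> Ppart (ideal_prod I J) (fun n => fst @^-1` A n).
Proof.
by move=> [/Phat_fst PA Acov]; split => //; rewrite -preimage_bigcup Acov.
Qed.

Lemma Mseq_fst E : Mseq I E -> Mseq (ideal_prod I J) (fun n => fst @^-1` E n).
Proof.
by move=> [IE Einc]; split=> [n|n p /Einc //]; exact: ideal_prod_fst.
Qed.

Lemma Mseq_snd E : Mseq J E -> Mseq (ideal_prod I J) (fun n => snd @^-1` E n).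
Proof.
by move=> [JE Einc]; split=> [n|n p /Einc //]; exact: ideal_prod_snd.
Qed.

Lemma Mseq_pos_sections A :
  Mseq (ideal_prod I J) A -> Mseq I (fun n => pos_sections J (A n)).
Proof. by move=> [IA Ainc]; split=> // n; exact: pos_sectionsS. Qed.

Definition column_prefix (A : nat -> set (nat * nat)) k x : set nat :=
  \bigcup_(j in [set j | (j <= k)%N]) [set y | A j (x, y)].

(* [psi x] is the first [k] at which the [x]-th column of [A 0 `|` ... `|` A k]
   becomes [J]-positive; the escape [k = x] makes [psi] total while keeping
   each fiber [psi @^-1` [set k]] inside [[set k] `|` pos_sections J (A k)]. *)
Definition exhaustion_index (A : nat -> set (nat * nat)) (psi : nat -> nat) :=
  forall x, (psi x = x \/ ~ J (column_prefix A (psi x) x)) /\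
            forall k, (k < psi x)%N -> J (column_prefix A k x).

Lemma exists_exhaustion_index A : exists psi, exhaustion_index A psi.
Proof.
have idx x : exists k, (k = x \/ ~ J (column_prefix A k x)) /\
    forall j, (j < k)%N -> J (column_prefix A j x).
  have [k Pk mink] := ex_least (P := fun k => k = x \/ ~ J (column_prefix A k x))
    (or_introl erefl).
  by exists k; split => // j /mink /not_orP [_ /contrapT].
by have [psi psiP] := choice idx; exists psi.
Qed.

Lemma exhaustion_index_fiber A psi x :
  exhaustion_index A psi -> x = psi x \/ ~ J [set y | A (psi x) (x, y)].
Proof.
move=> /(_ x) [[->|nJ] minx]; [by left | right => JA; apply: nJ].
case: (psi x) minx JA => [_ JA|k /(_ k (ltnSn k)) Jk JA].
  by rewrite /column_prefix bigcup_le0.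
by rewrite /column_prefix bigcup_leS; exact: idealU.
Qed.

(* For [psi x = n.+1] the [x]-th column of [A 0 `|` ... `|` A n] is [J]-small,
   and every point of the column outside it lies in some [A m.+1] with
   [n <= m], where the cylinder over [E i], [i <= n], catches it. *)
Lemma caught_exhaustion_sub A psi E : \bigcup_n A n = setT ->
  exhaustion_index A psi ->
  caught (fun k => psi @^-1` [set k]) E
  `<=` pos_sections J (caught A (fun n => fst @^-1` E n)).
Proof.
move=> Acov psiP x [n _ [/= psix [i /= ni Eix]]].
have [_ /(_ n) Jn] := psiP x; rewrite psix in Jn.
apply: (idealNsupC idJ (Jn (ltnSn n))) => y ncol.
have [[|m] _ Amxy] : (\bigcup_n A n) (x, y) by rewrite Acov.
  by exfalso; apply: ncol; exists 0.
have nm : (n <= m)%N.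
  by rewrite leqNgt; apply/negP => mn; apply: ncol; exists m.+1.
by exists m => //; split => //; exists i => //=; exact: leq_trans ni nm.
Qed.

Lemma bs_prod_le : inv_le (bs_fam (ideal_prod I J)) (bs_fam I).
Proof.
apply: (bs_fam_transfer (f := fun E n => fst @^-1` E n)) => [E|A PA].
  exact: Phat_fst.
case: PA => -[IA _] Acov; have [psi psiP] := exists_exhaustion_index A.
exists (fun k => psi @^-1` [set k]).
  split; last by apply/seteqP; split => // x _; exists (psi x).
  split=> [k|n m nm]; last by apply/seteqP; split => // x [/= -> /nm].
  apply: (idealS idI _ (idealU idI (ideal1 idI k) (IA k))) => x /= <-.
  by case: (exhaustion_index_fiber x psiP); [left|right].
move=> E; rewrite ideal_prodE.
exact/(idealS idI (caught_exhaustion_sub Acov psiP)).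
Qed.

Lemma pos_sections_caught_fst A E :
  (forall n m, n <> m -> A n `&` A m = set0) ->
  pos_sections J (caught (fun n => fst @^-1` A n) E)
  `<=` caught A (disjointed (fun i => pos_sections J (E i))).
Proof.
move=> Adisj x nJx.
have [y [n _ [/= Anx _]]] := not_ideal_inhabited idJ nJx.
have col_sub : [set y | caught (fun n => fst @^-1` A n) E (x, y)]
    `<=` \bigcup_(i in [set i | (i <= n)%N]) [set y | E i (x, y)].
  move=> y' [n' _ [/= An'x [i /= in' Ei]]]; exists i => //=.
  suff -> : n = n' by [].
  apply: contrapT => nn'.
  have /seteqP[+ _] := Adisj n.+1 n'.+1 (fun e => nn' (succn_inj e)).
  by move/(_ x (conj Anx An'x)).
have [i ni Eix] : exists2 i, (i <= n)%N & pos_sections J (E i) x.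
  apply: contrapT => noi; apply: nJx; apply: (idealS idJ col_sub).
  apply: (ideal_bigcup_le idJ) => i ni; apply: contrapT => nJi; apply: noi.
  by exists i.
have [j ji Djx] := disjointed_cover (F := fun i => pos_sections J (E i)) Eix.
by exists n => //; split => //; exists j => //=; exact: leq_trans ji ni.
Qed.

Lemma bs_le_prod : inv_le (bs_fam I) (bs_fam (ideal_prod I J)).
Proof.
pose f E := disjointed (fun i => pos_sections J (E i)).
apply: (bs_fam_transfer (f := f)).
  move=> E [IE _]; split=> [n|n m]; last exact: disjointed_disjoint.
  exact: (idealS idI (@disjointed_sub _ _ n) (IE n)).
move=> A PA; exists (fun n => fst @^-1` A n); first exact: Ppart_fst.
move=> E IA; rewrite ideal_prodE; apply: (idealS idI _ IA).
by apply: pos_sections_caught_fst; case: PA => -[].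
Qed.

Lemma bsigma_prod_le_l :
  inv_le (bsigma_fam (ideal_prod I J)) (bsigma_fam I).
Proof.
apply: (bsigma_fam_transfer (f := fun E n => fst @^-1` E n)) => [E|A MA].
  exact: Mseq_fst.
exists (fun n => pos_sections J (A n)); first exact: Mseq_pos_sections.
by move=> E n /pos_sectionsS; rewrite pos_sections_fst.
Qed.

Lemma bsigma_prod_le_r :
  inv_le (bsigma_fam (ideal_prod I J)) (bsigma_fam J).
Proof.
apply: (bsigma_fam_transfer (f := fun E n => snd @^-1` E n)) => [E|A [IA Ainc]].
  exact: Mseq_snd.
have [xs Jxs] := choice (fun n => ideal_prod_section (IA n)).
exists (fun k => \bigcup_(n in [set n | (n <= k)%N]) [set y | A n (xs n, y)]).
  split=> [k|k y [n /= nk Ay]]; first exact: ideal_bigcup_le.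
  by exists n => //=; exact: leqW.
by move=> E n EA y Ey; exists n => //=; exact: (EA (xs n, y)).
Qed.

Definition leftover (A : nat -> set nat) N (E : nat -> set (nat * nat)) k : set nat :=
  \bigcup_(n in [set n | (n <= k)%N]) \bigcup_(x in [set x | (x <= k)%N])
    [set y | ((N <= n)%N /\ ~ A n x) /\ E n (x, y)].

Definition corner (A B : nat -> set nat) n : set (nat * nat) :=
  [set p | A n p.1 \/ B (maxn n p.1) p.2].

Lemma Mseq_leftover A N E :
  (forall n, (N <= n)%N -> pos_sections J (E n) `<=` A n) ->
  Mseq J (leftover A N E).
Proof.
move=> EA; split=> [k|k y [n /= nk [x /= xk Py]]]; last first.
  by exists n; [exact: leqW | exists x => //; exact: leqW].
apply: (ideal_bigcup_le idJ) => n _; apply: (ideal_bigcup_le idJ) => x _.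
have [[Nn nAnx]|out] := pselect ((N <= n)%N /\ ~ A n x); last first.
  by apply: (idealS idJ _ (ideal0 idJ)) => y [/out].
have Jcol : J [set y | E n (x, y)] by apply: contrapT => /(EA n Nn x).
by apply: (idealS idJ _ Jcol) => y [].
Qed.

Lemma Mseq_corner A B :
  Mseq I A -> Mseq J B -> Mseq (ideal_prod I J) (corner A B).
Proof.
move=> [IA Ainc] [JB Binc]; split=> [n|n [x y] /= [Anx|Bxy]].
- rewrite ideal_prodE; apply: (idealS idI _ (IA n)) => x nJx.
  apply: contrapT => nAnx; apply: nJx.
  by apply: (idealS idJ _ (JB (maxn n x))) => y /= [].
- by left; exact: Ainc.
- right; apply: subset_chain_le Bxy => //.
  by rewrite geq_max !leq_max leqnSn leqnn orbT.
Qed.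

Lemma corner_sub A B N M E n :
  (N <= n)%N -> (M <= n)%N ->
  (forall k, (M <= k)%N -> leftover A N E k `<=` B k) ->
  E n `<=` corner A B n.
Proof.
move=> Nn Mn domB [x y] Exy /=.
have [Anx|nAnx] := pselect (A n x); [by left|right].
apply: domB; first exact: leq_trans Mn (leq_maxl n x).
by exists n => /=; [exact: leq_maxl | exists x => //=; exact: leq_maxr].
Qed.

(* If neither pushed-down family were a witness, one [A] in [M_I] would
   eventually dominate the positive sections of every [E] in [G], one [B] in
   [M_J] the columns of every [E] lying outside [A], and then [corner A B]
   would eventually dominate every [E] in [G]. *)
Lemma min_bsigma_le_prod :
  min_inv_le (bsigma_fam I) (bsigma_fam J) (bsigma_fam (ideal_prod I J)).
Proof.
move=> G [GM HG]; apply: contrapT => /not_orP [nI nJ].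
have [A MA [N domA]] := bsigma_famN_dominated
  (f := fun E n => pos_sections J (E n)) (fun E GE => Mseq_pos_sections (GM E GE))
  (fun h => nI (ex_intro2 _ _ _ h (card_image_le _ _))).
have [B MB [M domB]] := bsigma_famN_dominated
  (f := fun E => leftover A (N E) E) (fun E GE => Mseq_leftover (domA E GE))
  (fun h => nJ (ex_intro2 _ _ _ h (card_image_le _ _))).
have [E GE nEC] := HG _ (Mseq_corner MA MB).
have [n [NMn nEn]] := nEC (maxn (N E) (M E)).
rewrite geq_max in NMn; case/andP: NMn => Nn Mn.
exact/nEn/(corner_sub Nn Mn (domB E GE)).
Qed.

Lemma addw_prod_le_l : inv_le (addw_fam (ideal_prod I J)) (addw_fam I).
Proof.
apply: (addw_fam_transfer (f := preimage fst)) => [E|A IA].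
  exact: ideal_prod_fst.
exists (fun n => pos_sections J (A n)) => // E n /pos_sectionsS.
by rewrite pos_sections_fst.
Qed.

Lemma addw_prod_le_r : inv_le (addw_fam (ideal_prod I J)) (addw_fam J).
Proof.
apply: (addw_fam_transfer (f := preimage snd)) => [E|A IA].
  exact: ideal_prod_snd.
have [xs Jxs] := choice (fun n => ideal_prod_section (IA n)).
exists (fun n => [set y | A n (xs n, y)]) => // E n EA y Ey.
exact: (EA (xs n, y)).
Qed.

End fubini_product.

Theorem theorem5p13 (I J : set (set nat)) :
  ideal I -> ideal J ->
  (* (1) b_s(I (x) J) = b_s(I) *)
  (inv_le (bs_fam (ideal_prod I J)) (bs_fam I) /\
   inv_le (bs_fam I) (bs_fam (ideal_prod I J))) /\
  (* (2) b_sigma(I (x) J) = min{b_sigma(I), b_sigma(J)} *)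
  (inv_le_min (bsigma_fam (ideal_prod I J)) (bsigma_fam I) (bsigma_fam J) /\
   min_inv_le (bsigma_fam I) (bsigma_fam J) (bsigma_fam (ideal_prod I J))) /\
  (* (3) add_omega(I (x) J) <= min{add_omega(I), add_omega(J)} *)
  inv_le_min (addw_fam (ideal_prod I J)) (addw_fam I) (addw_fam J).
Proof.
move=> idI idJ; split; first by split; [exact: bs_prod_le | exact: bs_le_prod].
split; last by split; [exact: addw_prod_le_l | exact: addw_prod_le_r].
split; last exact: min_bsigma_le_prod.
by split; [exact: bsigma_prod_le_l | exact: bsigma_prod_le_r].
Qed.
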